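(* Let $\Lambda\subset\mathbb{R}^6$ be a lattice and $Q\in\mathrm{SO}(6)$ with $Q\Lambda=\Lambda$ and $Q^N=\mathbb{1}$, and let $\mathcal{P}=\mathbb{Z}_N=\langle\theta\rangle$ act on $\mathbb{R}^6$ by $\theta\mapsto Q$. Assume that for every $k\in\mathbb{Z}$ the fixed subspace $\mathrm{Fix}(Q^k)=\{x\in\mathbb{R}^6: Q^kx=x\}$ has dimension $0$, $2$ or $6$. Let $\mathcal{O}\subseteq\mathcal{P}^2$ be the $\mathcal{N}=2$ sector. Then $\mathcal{O}$ is closed under the action $\ast$ of $\mathrm{SL}(2,\mathbb{Z})$, and in particular under every subgroup of $\mathrm{SL}(2,\mathbb{Z})$. Moreover, all elements of a minimally closed subset of $\mathcal{O}$ fix the same plane, i.e. there is a single two-dimensional subspace $E$ such that every nontrivial component $g$ or $h$ of every element $(g,h)$ of that subset satisfies $\mathrm{Fix}(g)=E$.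
   Context: The action of $V=\begin{pmatrix} a&b\\c&d\end{pmatrix}\in\mathrm{SL}(2,\mathbb{Z})$ on $\mathcal{P}^2$ is $(g,h)\ast V=(g^ah^{-c},g^{-b}h^d)$. The $\mathcal{N}=2$ sector is the set of pairs $(g,h)\in\mathcal{P}^2$ with $(g,h)\neq(1,1)$ for which there is a two-dimensional subspace $E\subset\mathbb{R}^6$ (a fixed plane) such that each of $g,h$ is either the identity or has fixed subspace exactly $E$ (''$g$ and $h$ fix the same plane''). A subset is closed under a group $G$ if it is mapped into itself by every $V\in G$; a closed set is minimally closed if it is nonempty and contains no nonempty proper closed subset. *)

From HB Require Import structures.
From mathcomp Require Import all_boot all_order all_algebra.
From mathcomp Require Import reals.
Set Implicit Arguments. Unset Strict Implicit. Unset Printing Implicit Defensive.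
Import Order.TTheory GRing.Theory Num.Theory.
Local Open Scope ring_scope.

Section Defs.
Variable R : realType.

(* Vectors of R^6 are column vectors 'cV[R]_6; a matrix g acts by x |-> g *m x. *)

(* Fix(g) as a subspace (row space, mxalgebra convention): its rows u are
   exactly the u with u *m (g^T - 1) = 0, i.e. g *m u^T = u^T. *)
Definition Fix (g : 'M[R]_6) : 'M[R]_6 := kermx (g^T - 1%:M).

Definition is_lattice (L : 'cV[R]_6 -> Prop) : Prop :=
  exists B : 'M[R]_6, B \in unitmx /\
    forall x, L x <-> exists z : 'cV[int]_6, x = B *m map_mx (fun n : int => n%:~R) z.

Definition preserves (Q : 'M[R]_6) (L : 'cV[R]_6 -> Prop) : Prop :=
  forall y, L y <-> exists x, L x /\ y = Q *m x.

Definition in_SO6 (Q : 'M[R]_6) : Prop := Q *m Q^T = 1%:M /\ \det Q = 1.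

(* The point group P = <Q> realized as the (faithful) cyclic matrix group. *)
Definition inP (Q g : 'M[R]_6) : Prop := exists k : nat, g = Q ^+ k.

Definition id_or_fixes (g E : 'M[R]_6) : Prop := g = 1 \/ (Fix g == E)%MS.

Definition N2sector (Q : 'M[R]_6) (gh : 'M[R]_6 * 'M[R]_6) : Prop :=
  [/\ inP Q gh.1, inP Q gh.2, gh <> (1, 1) &
      exists E : 'M[R]_6, \rank E = 2%N /\ id_or_fixes gh.1 E /\ id_or_fixes gh.2 E].

Definition sl2act (gh : 'M[R]_6 * 'M[R]_6) (V : 'M[int]_2) : 'M[R]_6 * 'M[R]_6 :=
  (gh.1 ^ (V 0 0) * gh.2 ^ (- V 1 0), gh.1 ^ (- V 0 1) * gh.2 ^ (V 1 1)).

Definition closed_under (G : 'M[int]_2 -> Prop)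
  (S : 'M[R]_6 * 'M[R]_6 -> Prop) : Prop :=
  forall V x, G V -> S x -> S (sl2act x V).

Definition minimally_closed (G : 'M[int]_2 -> Prop)
  (S : 'M[R]_6 * 'M[R]_6 -> Prop) : Prop :=
  [/\ exists x, S x, closed_under G S &
      forall T : 'M[R]_6 * 'M[R]_6 -> Prop,
        (forall x, T x -> S x) -> (exists x, T x) -> closed_under G T ->
        forall x, S x -> T x].

End Defs.

Definition SL2Z (V : 'M[int]_2) : Prop := \det V = 1.

(* subgroup of SL(2,Z); inverse of a det-1 matrix is its adjugate *)
Definition subgroup_SL2Z (G : 'M[int]_2 -> Prop) : Prop :=
  [/\ forall V, G V -> SL2Z V, G 1%:M,
      forall U V, G U -> G V -> G (U *m V) &
      forall V, G V -> G (\adj V)].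

From HB Require Import structures.
From mathcomp Require Import all_boot all_order all_algebra.
From mathcomp Require Import reals.
From mathcomp Require Import ring.
Import Order.TTheory GRing.Theory Num.Theory.
Local Open Scope ring_scope.

(* Both claims rest on one observation: the components of (g, h) * V are
   products of integer powers of g and h. If g and h fix the rows of a plane E
   pointwise, so does every such product, and the hypothesis on the dimensions
   of the fixed spaces of the powers of Q forces such a product to be either
   the identity or to have fixed space exactly E. Hence the N = 2 sector is
   closed, and inside a minimally closed S the elements fixing the plane of one
   given element already form a nonempty closed subset, which must be all of S. *)

Lemma det_mx2 (R : comNzRingType) (A : 'M[R]_2) :
  \det A = A 0 0 * A 1 1 - A 0 1 * A 1 0.
Proof.
rewrite (expand_det_row _ 0) !big_ord_recl big_ord0 /cofactor !det_mx11 /=.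
rewrite !mxE /= addr0 expr0 mul1r expr1 mulN1r mulrN.
by congr (_ * _ - _ * _); congr (A _ _); apply/val_inj.
Qed.

Lemma minimally_closed_invariant (R : realType) (G : 'M[int]_2 -> Prop)
    (S P : 'M[R]_6 * 'M[R]_6 -> Prop) :
  minimally_closed G S -> (exists2 x, S x & P x) ->
  (forall V x, G V -> S x -> P x -> P (sl2act x V)) ->
  forall x, S x -> P x.
Proof.
move=> [_ clS minS] [x0 Sx0 Px0] clP x Sx.
pose T x := S x /\ P x.
have clT : closed_under G T by move=> V y GV [Sy Py]; split; [apply: clS | apply: clP].
by have [] := minS T (fun y Ty => Ty.1) (ex_intro _ x0 (conj Sx0 Px0)) clT x Sx.
Qed.

Section FixedSpaces.
Variable R : realType.
Implicit Types (g h E : 'M[R]_6).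

Lemma sub_FixP E g : reflect (E *m g^T = E) (E <= Fix g)%MS.
Proof.
apply: (iffP sub_kermxP); rewrite mulmxBr mulmx1.
  by move/eqP; rewrite subr_eq0 => /eqP.
by move=> ->; rewrite subrr.
Qed.

Lemma sub_FixM E g h : (E <= Fix g)%MS -> (E <= Fix h)%MS -> (E <= Fix (g * h))%MS.
Proof.
move=> /sub_FixP Eg /sub_FixP Eh; apply/sub_FixP.
by rewrite -mulmxE trmx_mul mulmxA Eh Eg.
Qed.

Lemma sub_FixV E g : g \is a GRing.unit -> (E <= Fix g)%MS -> (E <= Fix g^-1)%MS.
Proof.
move=> gu /sub_FixP Eg; apply/sub_FixP.
by rewrite -{1}Eg -mulmxA -trmx_mul mulmxE mulVr // trmx1 mulr1.
Qed.

Lemma sub_FixXz E g (k : int) :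
  g \is a GRing.unit -> (E <= Fix g)%MS -> (E <= Fix (g ^ k))%MS.
Proof.
move=> gu Eg.
have EgX n : (E <= Fix (g ^+ n))%MS.
  elim: n => [|n IH]; last by rewrite exprS; apply: sub_FixM.
  by apply/sub_FixP; rewrite expr0 trmx1 mulmx1.
by case: k => n; [apply: EgX | apply: sub_FixV; [rewrite unitrX | apply: EgX]].
Qed.

Lemma Fix_full g : \rank (Fix g) = 6%N -> g = 1.
Proof.
move=> full; have : (1%:M <= Fix g)%MS by rewrite sub1mx /row_full full.
by move/sub_FixP; rewrite mul1mx => gT1; rewrite -[g]trmxK gT1 trmx1.
Qed.

Lemma id_or_fixes_sub_Fix E g : id_or_fixes g E -> (E <= Fix g)%MS.
Proof.
by case=> [->|/andP[]//]; apply/sub_FixP; rewrite trmx1 mulmx1.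
Qed.

(* Fix g cannot have rank 0 once it contains the plane E, and rank 6 means g = 1. *)
Lemma sub_Fix_id_or_fixes E g :
  \rank E = 2%N -> \rank (Fix g) \in [:: 0%N; 2%N; 6%N] ->
  (E <= Fix g)%MS -> id_or_fixes g E.
Proof.
move=> rE rFix EFix; have := mxrankS EFix; rewrite rE.
move: rFix; rewrite !inE => /or3P[/eqP-> // | /eqP rF2 _ | /eqP/Fix_full-> _].
- right; apply/eqmxP/eqmx_sym/eqmxP.
  by rewrite -(mxrank_leqif_eq EFix) rE rF2.
- by left.
Qed.

End FixedSpaces.

Section PointGroupSector.
Context {R : realType} {Q : 'M[R]_6} {N : nat}.
Hypothesis Q_unit : Q \is a GRing.unit.
Hypothesis N_gt0 : (0 < N)%N.
Hypothesis QN : Q ^+ N = 1.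
Hypothesis rank_FixQ : forall k : int, \rank (Fix (Q ^ k)) \in [:: 0%N; 2%N; 6%N].

Lemma inP_exprz (k : int) : inP Q (Q ^ k).
Proof.
rewrite (divz_eq k N) exprzDr // mulrC -exprz_exp.
have -> : Q ^ (N%:Z) = 1 by rewrite -QN.
rewrite exp1rz mul1r.
have : 0 <= (k %% N)%Z by apply: modz_ge0; rewrite eqz_nat -lt0n.
by case: (k %% N)%Z => // n _; exists n.
Qed.

Lemma inP_exprzP g : inP Q g -> exists m : int, g = Q ^ m.
Proof. by case=> n ->; exists n%:Z. Qed.

Lemma inP2_exprzP (x : 'M[R]_6 * 'M[R]_6) :
  inP Q x.1 -> inP Q x.2 -> exists m1 m2 : int, x = (Q ^ m1, Q ^ m2).
Proof. by case: x => g h /inP_exprzP[m1 /= ->] /inP_exprzP[m2 /= ->]; exists m1, m2. Qed.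

Lemma sl2act_exprz (m1 m2 : int) (V : 'M[int]_2) :
  sl2act (Q ^ m1, Q ^ m2) V =
  (Q ^ (m1 * V 0 0 - m2 * V 1 0), Q ^ (- (m1 * V 0 1) + m2 * V 1 1)).
Proof. by rewrite /sl2act /= !exprz_exp -!exprzDr // !mulrN. Qed.

Lemma id_or_fixes_exprz E (m1 m2 a b : int) :
  \rank E = 2%N -> id_or_fixes (Q ^ m1) E -> id_or_fixes (Q ^ m2) E ->
  id_or_fixes (Q ^ (m1 * a + m2 * b)) E.
Proof.
move=> rE /id_or_fixes_sub_Fix E1 /id_or_fixes_sub_Fix E2.
apply: sub_Fix_id_or_fixes => //.
rewrite exprzDr // -!exprz_exp.
by apply: sub_FixM; apply: sub_FixXz => //; apply: unitrXz.
Qed.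

(* V is invertible, so the exponents of x are integer combinations of those of x * V. *)
Lemma sl2act_eq11 {m1 m2 : int} {V : 'M[int]_2} :
  SL2Z V -> sl2act (Q ^ m1, Q ^ m2) V = (1, 1) -> (Q ^ m1, Q ^ m2) = (1, 1).
Proof.
rewrite /SL2Z det_mx2 sl2act_exprz => detV [Qk1 Qk2].
set k1 := _ - _ in Qk1; set k2 := _ + _ in Qk2.
have -> : m1 = k1 * V 1 1 + k2 * V 1 0 by rewrite /k1 /k2 -[LHS]mulr1 -detV; ring.
have -> : m2 = k1 * V 0 1 + k2 * V 0 0 by rewrite /k1 /k2 -[LHS]mulr1 -detV; ring.
by rewrite !exprzDr // -!exprz_exp Qk1 Qk2 !exp1rz !mulr1.
Qed.

Lemma sl2act_id_or_fixes E x V :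
  \rank E = 2%N -> inP Q x.1 -> inP Q x.2 ->
  id_or_fixes x.1 E -> id_or_fixes x.2 E ->
  id_or_fixes (sl2act x V).1 E /\ id_or_fixes (sl2act x V).2 E.
Proof.
move=> rE x1 x2; have [m1 [m2 ->]] := @inP2_exprzP x x1 x2.
rewrite sl2act_exprz /= -!mulrN => E1 E2.
by split; apply: id_or_fixes_exprz.
Qed.

Lemma N2sector_sl2act x V : SL2Z V -> N2sector Q x -> N2sector Q (sl2act x V).
Proof.
move=> detV [x1 x2 x_neq1 [E [rE [E1 E2]]]].
have [E1' E2'] := @sl2act_id_or_fixes E x V rE x1 x2 E1 E2.
have [m1 [m2 def_x]] := @inP2_exprzP x x1 x2; subst x.
split; [| | by move/(sl2act_eq11 detV) | by exists E];
  by rewrite sl2act_exprz /=; apply: inP_exprz.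
Qed.

End PointGroupSector.

Theorem theorem2p9 (R : realType) (L : 'cV[R]_6 -> Prop) (Q : 'M[R]_6) (N : nat) :
  is_lattice L -> in_SO6 Q -> preserves Q L -> (0 < N)%N -> Q ^+ N = 1 ->
  (forall k : int, \rank (Fix (Q ^ k)) \in [:: 0%N; 2%N; 6%N]) ->
  closed_under SL2Z (N2sector Q) /\
  (forall G, subgroup_SL2Z G -> closed_under G (N2sector Q)) /\
  (forall G, subgroup_SL2Z G ->
     forall S : 'M[R]_6 * 'M[R]_6 -> Prop,
       (forall x, S x -> N2sector Q x) -> minimally_closed G S ->
       exists E : 'M[R]_6, \rank E = 2%N /\
         forall gh, S gh -> id_or_fixes gh.1 E /\ id_or_fixes gh.2 E).
Proof.
move=> _ [QQT _] _ N_gt0 QN rank_FixQ.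
have Q_unit : Q \is a GRing.unit by have [] := mulmx1_unit QQT.
have closedSL2 : closed_under SL2Z (N2sector Q).
  by move=> V x; apply: (N2sector_sl2act Q_unit N_gt0 QN rank_FixQ).
have closedG G : subgroup_SL2Z G -> closed_under G (N2sector Q).
  by case=> G_SL2 _ _ _ V x /G_SL2; apply: closedSL2.
do 2!split=> //.
move=> G _ S S_sector minS.
have [[x0 Sx0] _ _] := minS.
have [_ _ _ [E [rE [E1 E2]]]] := S_sector x0 Sx0.
exists E; split=> //.
pose fixes_E x := id_or_fixes x.1 E /\ id_or_fixes x.2 E.
apply: (@minimally_closed_invariant _ _ S fixes_E minS); first by exists x0.
move=> V x GV Sx [Ex1 Ex2]; have [x1P x2P _ _] := S_sector x Sx.
exact: (sl2act_id_or_fixes Q_unit rank_FixQ).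
Qed.
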